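(* Let $(X,\|\cdot\|)$ be a normed linear space, let $I$ be a non-trivial admissible ideal in $\mathbb{N}$ and let $r>0$. A sequence $x=\{x_k\}_{k\in\mathbb{N}}$ in $X$ is rough $I$-statistically convergent with roughness degree $r$ to $\xi\in X$ if and only if there exists a sequence $y=\{y_k\}_{k\in\mathbb{N}}$ in $X$ which is $I$-statistically convergent to $\xi$ and satisfies $\|x_k-y_k\|\le r$ for all $k\in\mathbb{N}$.
   Context: An ideal $I$ in $\mathbb{N}$ is a family of subsets of $\mathbb{N}$ containing $\emptyset$, closed under finite unions and under taking subsets; it is non-trivial if $\mathbb{N}\notin I$ and admissible if $\{n\}\in I$ for every $n$. A sequence $y$ in $X$ is $I$-statistically convergent to $\xi$ if for every $\varepsilon>0$ and $\delta>0$, $\{n\in\mathbb{N}:\frac1n|\{k\le n:\|y_k-\xi\|\ge\varepsilon\}|\ge\delta\}\in I$. A sequence $x$ is rough $I$-statistically convergent with roughness degree $r\ge0$ to $\xi$ if for every $\varepsilon>0$ and $\delta>0$, $\{n\in\mathbb{N}:\frac1n|\{k\le n:\|x_k-\xi\|\ge r+\varepsilon\}|\ge\delta\}\in I$. *)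

From HB Require Import structures.
From mathcomp Require Import all_boot all_order all_algebra.
From mathcomp Require Import all_classical all_reals.
From mathcomp Require Import topology normedtype.
Set Implicit Arguments. Unset Strict Implicit. Unset Printing Implicit Defensive.
Import Order.TTheory GRing.Theory Num.Theory.
Import numFieldNormedType.Exports.
Local Open Scope classical_set_scope.
Local Open Scope ring_scope.

Definition is_ideal (I : set (set nat)) : Prop :=
  [/\ I set0,
      (forall A B, I A -> I B -> I (A `|` B)) &
      (forall A B, A `<=` B -> I B -> I A)].

Definition nontrivial_ideal (I : set (set nat)) : Prop := ~ I setT.

Definition admissible_ideal (I : set (set nat)) : Prop := forall n : nat, I [set n].

(* The paper's N = {1,2,...}; the sequence index k = 1..n is represented by the
   Rocq index k-1 in 'I_n = {0,..,n-1}, and n ranges over positive naturals. *)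
Definition stat_set (R : realType) (X : normedModType R)
    (u : nat -> X) (xi : X) (t delta : R) : set nat :=
  [set n : nat | (0 < n)%N /\
     delta <= (#|[set k : 'I_n | t <= `|u (nat_of_ord k) - xi|]|%:R / n%:R)].

Definition I_stat_cvg (R : realType) (X : normedModType R)
    (I : set (set nat)) (y : nat -> X) (xi : X) : Prop :=
  forall eps delta : R, 0 < eps -> 0 < delta -> I (stat_set y xi eps delta).

Definition rough_I_stat_cvg (R : realType) (X : normedModType R)
    (I : set (set nat)) (r : R) (x : nat -> X) (xi : X) : Prop :=
  forall eps delta : R, 0 < eps -> 0 < delta -> I (stat_set x xi (r + eps) delta).

From HB Require Import structures.
From mathcomp Require Import all_boot all_order all_algebra.
From mathcomp Require Import all_classical all_reals.
From mathcomp Require Import topology normedtype.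
Set Implicit Arguments. Unset Strict Implicit. Unset Printing Implicit Defensive.
Import Order.TTheory GRing.Theory Num.Theory.
Import numFieldNormedType.Exports.
Local Open Scope classical_set_scope.
Local Open Scope ring_scope.

(* For the forward direction, move each x_k toward xi by min(r, ||x_k - xi||):
   the new sequence stays within r of x and ||y_k - xi|| = max(||x_k - xi|| - r, 0),
   so ||y_k - xi|| >= eps exactly when ||x_k - xi|| >= r + eps.  The backward
   direction is the triangle inequality.  Both directions only use that I is
   closed under subsets. *)

Section StepToward.
Variables (R : realFieldType) (X : normedModType R).

Definition step_toward (xi : X) (r : R) (v : X) : X :=
  if `|v - xi| <= r then xi else v - (r / `|v - xi|) *: (v - xi).

Lemma norm_sub_step_toward (xi : X) (r : R) (v : X) :
  0 <= r -> `|v - step_toward xi r v| <= r.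
Proof.
move=> r_ge0; rewrite /step_toward; case: ifPn => //; rewrite -ltNge => r_lt.
have d_gt0 : 0 < `|v - xi| by exact: le_lt_trans r_lt.
by rewrite opprB addrCA subrr addr0 normrZ ger0_norm ?divr_ge0 // mulfVK ?gt_eqF.
Qed.

Lemma dist_step_toward (xi : X) (r : R) (v : X) :
  0 <= r -> `|step_toward xi r v - xi| = Num.max (`|v - xi| - r) 0.
Proof.
move=> r_ge0; rewrite /step_toward; case: ifPn => [d_le|].
  by rewrite subrr normr0 max_r // subr_le0.
rewrite -ltNge => r_lt; have d_gt0 : 0 < `|v - xi| by exact: le_lt_trans r_lt.
have -> : v - (r / `|v - xi|) *: (v - xi) - xi = (1 - r / `|v - xi|) *: (v - xi).
  by rewrite scalerBl scale1r addrAC.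
rewrite normrZ ger0_norm; last by rewrite subr_ge0 ler_pdivrMr // mul1r ltW.
rewrite mulrBl mul1r mulfVK ?gt_eqF // max_l // subr_ge0; exact: ltW.
Qed.

End StepToward.

Lemma stat_set_subset (R : realType) (X : normedModType R) (u v : nat -> X)
    (xi : X) (t t' delta : R) :
  (forall k, t' <= `|v k - xi| -> t <= `|u k - xi|) ->
  stat_set v xi t' delta `<=` stat_set u xi t delta.
Proof.
move=> vu n [n_gt0 le_delta]; split => //; apply: (le_trans le_delta).
apply: ler_wpM2r; first by rewrite invr_ge0 ler0n.
rewrite ler_nat; apply: subset_leq_card; apply/fintype.subsetP => k.
by rewrite /in_mem /= !in_setE; exact: vu.
Qed.

Section RoughStatCvg.
Variables (R : realType) (X : normedModType R) (I : set (set nat)).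
Hypothesis I_subset_closed : forall A B, A `<=` B -> I B -> I A.

Lemma I_stat_cvg_step_toward (r : R) (x : nat -> X) (xi : X) :
  0 <= r -> rough_I_stat_cvg I r x xi ->
  I_stat_cvg I (fun k => step_toward xi r (x k)) xi.
Proof.
move=> r_ge0 x_cvg eps delta eps_gt0 delta_gt0.
apply: I_subset_closed (x_cvg eps delta eps_gt0 delta_gt0).
apply: stat_set_subset => k; rewrite dist_step_toward //.
case: (leP (`|x k - xi| - r) 0) => [_ /(lt_le_trans eps_gt0)|_].
  by rewrite ltxx.
by rewrite lerBrDl.
Qed.

Lemma rough_I_stat_cvg_of_close (r : R) (x y : nat -> X) (xi : X) :
  I_stat_cvg I y xi -> (forall k, `|x k - y k| <= r) ->
  rough_I_stat_cvg I r x xi.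
Proof.
move=> y_cvg xy_close eps delta eps_gt0 delta_gt0.
apply: I_subset_closed (y_cvg eps delta eps_gt0 delta_gt0).
apply: stat_set_subset => k le_dist_x.
have dist_x_le : `|x k - xi| <= r + `|y k - xi|.
  have := ler_normD (x k - y k) (y k - xi); rewrite addrA subrK => /le_trans.
  by apply; rewrite lerD2r.
by rewrite -(lerD2l r); exact: le_trans le_dist_x dist_x_le.
Qed.

End RoughStatCvg.

Theorem theorem3p5 (R : realType) (X : normedModType R) (I : set (set nat))
    (r : R) (x : nat -> X) (xi : X) :
  is_ideal I -> nontrivial_ideal I -> admissible_ideal I -> 0 < r ->
  (rough_I_stat_cvg I r x xi <->
   exists y : nat -> X, I_stat_cvg I y xi /\ (forall k : nat, `|x k - y k| <= r)).
Proof.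
move=> [_ _ I_subset_closed] _ _ r_gt0; split.
- move=> x_cvg; exists (fun k => step_toward xi r (x k)); split=> [|k].
    exact: (I_stat_cvg_step_toward I_subset_closed (ltW r_gt0) x_cvg).
  exact: (norm_sub_step_toward xi (x k) (ltW r_gt0)).
- move=> [y [y_cvg xy_close]].
  exact: (rough_I_stat_cvg_of_close I_subset_closed y_cvg xy_close).
Qed.
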